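(* For all m2m spaces $\mathcal X=(X,r,\nu)$ and $\mathcal Y=(Y,d,\lambda)$, $d_{2GP}(\mathcal X,\mathcal Y)=\inf_{r'}d_P^{\mathcal M_f(X\sqcup Y,r')}(\nu,\lambda)$, where the infimum ranges over all metrics $r'$ on the disjoint union $X\sqcup Y$ extending $r$ and $d$, and $\nu,\lambda$ are regarded as two-level measures on $X\sqcup Y$ via the canonical inclusions.
   Context: For a Polish space $X$, $\mathcal M_f(X)$ is the set of finite Borel measures; $M_\nu(A)=\int\mu(A)\,d\nu(\mu)$; $g_*\mu=\mu\circ g^{-1}$, $g_{**}\nu=\nu\circ(g_* )^{-1}$. An m2m space is $(X,r,\nu)$, $X\subset\mathbb R^{\mathbb N}$ non-empty, $(X,r)$ complete separable metric, $\nu\in\mathcal M_f(\mathcal M_f(X))$, considered up to equivalence (measurable maps isometric on $\operatorname{supp}M_\nu$ with $\lambda=f_{**}\nu$). Prokhorov distance for finite measures on a metric space $(S,\rho)$: $d_P^S(\mu,\eta)=\inf\{\varepsilon>0:\mu(A)\le\eta(A^\varepsilon)+\varepsilon,\eta(A)\le\mu(A^\varepsilon)+\varepsilon\ \forall A\text{ closed}\}$, $A^\varepsilon$ the open $\varepsilon$-neighbourhood; $d_P^{\mathcal M_f(Z)}$ is the Prokhorov metric for measures on $(\mathcal M_f(Z),d_P^Z)$. $d_{2GP}(\mathcal X,\mathcal Y)=\inf d_P^{\mathcal M_f(Z)}(\iota_{X**}\nu,\iota_{Y**}\lambda)$ over complete separable metric spaces $Z$ and isometric embeddings $\iota_X:X\to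 Z$, $\iota_Y:Y\to Z$. *)

From Stdlib Require Import Reals.
From Coquelicot Require Import Rbar Lub.
Open Scope R_scope.

Section Generic.
Context {T : Type}.

(* Level-one distances are real metrics (embedded via Finite); the level-two
   distance is the Prokhorov distance, which we compute in Rbar. *)

Definition nbhd (dist : T -> T -> Rbar) (A : T -> Prop) (e : R) : T -> Prop :=
  fun x => exists a, A a /\ Rbar_lt (dist x a) (Finite e).

Definition is_open (dist : T -> T -> Rbar) (U : T -> Prop) : Prop :=
  forall x, U x -> exists e, 0 < e /\ forall y, Rbar_lt (dist x y) (Finite e) -> U y.

Definition is_closed (dist : T -> T -> Rbar) (A : T -> Prop) : Prop :=
  is_open dist (fun x => ~ A x).

Definition sigma_algebra (S : (T -> Prop) -> Prop) : Prop :=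
  S (fun _ => False) /\
  (forall A, S A -> S (fun x => ~ A x)) /\
  (forall F : nat -> T -> Prop, (forall n, S (F n)) -> S (fun x => exists n, F n x)).

Definition borel (dist : T -> T -> Rbar) (A : T -> Prop) : Prop :=
  forall S, sigma_algebra S -> (forall U, is_open dist U -> S U) -> S A.

Definition is_fmeasure (dist : T -> T -> Rbar) (mu : (T -> Prop) -> R) : Prop :=
  (forall A, borel dist A -> 0 <= mu A) /\
  mu (fun _ => False) = 0 /\
  (forall F : nat -> T -> Prop,
     (forall n, borel dist (F n)) ->
     (forall n m x, F n x -> F m x -> n = m) ->
     infinite_sum (fun n => mu (F n)) (mu (fun x => exists n, F n x))).

Definition prokhorov (dist : T -> T -> Rbar) (mu eta : (T -> Prop) -> R) : Rbar :=
  Rbar_glb (fun v => exists e : R, v = Finite e /\ 0 < e /\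
    forall A, is_closed dist A ->
      mu A <= eta (nbhd dist A e) + e /\ eta A <= mu (nbhd dist A e) + e).

End Generic.

Definition is_metric {T : Type} (d : T -> T -> R) : Prop :=
  (forall x y, d x y = 0 <-> x = y) /\
  (forall x y, d x y = d y x) /\
  (forall x y z, d x z <= d x y + d y z).

Definition is_complete {T : Type} (d : T -> T -> R) : Prop :=
  forall u : nat -> T,
    (forall e, 0 < e -> exists N, forall n m, (N <= n)%nat -> (N <= m)%nat -> d (u n) (u m) < e) ->
    exists l, forall e, 0 < e -> exists N, forall n, (N <= n)%nat -> d (u n) l < e.

Definition countable_set {T : Type} (D : T -> Prop) : Prop :=
  exists f : T -> nat, forall x y, D x -> D y -> f x = f y -> x = y.

Definition is_separable {T : Type} (d : T -> T -> R) : Prop :=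
  exists D : T -> Prop, countable_set D /\
    forall x e, 0 < e -> exists y, D y /\ d x y < e.

Definition polish_metric {T : Type} (d : T -> T -> R) : Prop :=
  is_metric d /\ is_complete d /\ is_separable d.

Definition isometric {T Z : Type} (d : T -> T -> R) (dZ : Z -> Z -> R) (i : T -> Z) : Prop :=
  forall x y, dZ (i x) (i y) = d x y.

Definition fin_dist {T : Type} (d : T -> T -> R) : T -> T -> Rbar := fun x y => Finite (d x y).

Definition Mf {T : Type} (d : T -> T -> R) : Type :=
  { mu : (T -> Prop) -> R | is_fmeasure (fin_dist d) mu }.

Definition dP {T : Type} (d : T -> T -> R) : Mf d -> Mf d -> Rbar :=
  fun mu eta => prokhorov (fin_dist d) (proj1_sig mu) (proj1_sig eta).

Definition is_2measure {T : Type} (d : T -> T -> R) (nu : (Mf d -> Prop) -> R) : Prop :=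
  is_fmeasure (dP d) nu.

Definition dP2 {T : Type} (d : T -> T -> R) (nu lam : (Mf d -> Prop) -> R) : Rbar :=
  prokhorov (dP d) nu lam.

Definition push {T Z : Type} (g : T -> Z) (mu : (T -> Prop) -> R) : (Z -> Prop) -> R :=
  fun A => mu (fun x => A (g x)).

(* g_** nu = nu o (g_* )^{-1}, for nu a measure on M_f(T) *)
Definition push2 {T Z : Type} (d : T -> T -> R) (dZ : Z -> Z -> R) (g : T -> Z)
  (nu : (Mf d -> Prop) -> R) : (Mf dZ -> Prop) -> R :=
  fun B => nu (fun mu => exists eta : Mf dZ, B eta /\ proj1_sig eta = push g (proj1_sig mu)).

(* X is a nonempty subset of R^N; the carrier is the subtype {x | Xs x} *)
Definition RN := nat -> R.
Definition pts (Xs : RN -> Prop) : Type := { x : RN | Xs x }.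

Definition is_m2m (Xs : RN -> Prop) (r : pts Xs -> pts Xs -> R)
  (nu : (Mf r -> Prop) -> R) : Prop :=
  (exists x, Xs x) /\ polish_metric r /\ is_2measure r nu.

Definition d2GP (Xs : RN -> Prop) (r : pts Xs -> pts Xs -> R) (nu : (Mf r -> Prop) -> R)
  (Ys : RN -> Prop) (d : pts Ys -> pts Ys -> R) (lam : (Mf d -> Prop) -> R) : Rbar :=
  Rbar_glb (fun v => exists (Z : Type) (dZ : Z -> Z -> R) (iX : pts Xs -> Z) (iY : pts Ys -> Z),
    polish_metric dZ /\ isometric r dZ iX /\ isometric d dZ iY /\
    v = dP2 dZ (push2 r dZ iX nu) (push2 d dZ iY lam)).

Definition extends_both {X Y : Type} (r : X -> X -> R) (d : Y -> Y -> R)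
  (r' : (X + Y)%type -> (X + Y)%type -> R) : Prop :=
  is_metric r' /\
  (forall x x', r' (inl x) (inl x') = r x x') /\
  (forall y y', r' (inr y) (inr y') = d y y').

From Stdlib Require Import Reals Lra Lia Classical.
From Stdlib Require Import FunctionalExtensionality PropExtensionality ProofIrrelevance
  IndefiniteDescription.
From Coquelicot Require Import Rbar Lub.
Open Scope R_scope.

(* A metric on X ⊔ Y extending r and d turns X ⊔ Y into a complete separable space
   containing X and Y isometrically, so d_2GP is at most the right-hand side.
   Conversely, given isometric embeddings iX, iY into Z and ε > 0, the metric
   r_ε(a, b) = d_Z(j a, j b) + ε·[a and b lie in different summands], with j the
   map X ⊔ Y → Z induced by iX and iY, extends r and d, and j shrinks distances
   by at most ε. A map that never increases distances and shrinks them by at most ε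
   shrinks Prokhorov distances by at most ε as well: this holds for j itself, hence
   for the induced map M_f(X ⊔ Y) → M_f(Z), hence for the two-level measures. *)

Lemma pred_ext {T : Type} (A B : T -> Prop) : (forall x, A x <-> B x) -> A = B.
Proof. intro H. extensionality x. apply propositional_extensionality, H. Qed.

Lemma Rbar_glb_is_glb (E : Rbar -> Prop) : Rbar_is_glb E (Rbar_glb E).
Proof. exact (proj2_sig (Rbar_ex_glb E)). Qed.

Lemma Rbar_le_of_le_plus_pos (a b : Rbar) :
  Rbar_le (Finite 0) b -> (forall h, 0 < h -> Rbar_le a (Rbar_plus b (Finite h))) ->
  Rbar_le a b.
Proof.
  intros Hb H. destruct b as [b| |]; [|now destruct a|easy].
  destruct a as [a| |]; simpl; auto.
  - apply Rnot_lt_le. intro Hlt. specialize (H ((a - b) / 2) ltac:(lra)). simpl in H. lra.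
  - exact (H 1 Rlt_0_1).
Qed.

Definition real_glb (P : R -> Prop) : Rbar :=
  Rbar_glb (fun v => exists e, v = Finite e /\ P e).

Lemma real_glb_le P e : P e -> Rbar_le (real_glb P) (Finite e).
Proof. intro He. apply Rbar_glb_is_glb. now exists e. Qed.

Lemma real_glb_ge P b : (forall e, P e -> Rbar_le b (Finite e)) -> Rbar_le b (real_glb P).
Proof. intro H. apply Rbar_glb_is_glb. intros v [e [-> He]]. auto. Qed.

Lemma real_glb_ge0 P : (forall e, P e -> 0 < e) -> Rbar_le (Finite 0) (real_glb P).
Proof. intro H. apply real_glb_ge. intros e He. now apply Rlt_le, H. Qed.

Lemma real_glb_antimono P Q : (forall e, P e -> Q e) -> Rbar_le (real_glb Q) (real_glb P).
Proof. intro H. apply Rbar_glb_subset. intros v [e [-> He]]. eauto. Qed.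

Lemma real_glb_approx P g h : real_glb P = Finite g -> 0 < h -> exists e, P e /\ e < g + h.
Proof.
  intros Hg Hh. apply NNPP. intro Hn.
  assert (Hle : Rbar_le (Finite (g + h)) (real_glb P)).
  { apply real_glb_ge. intros e He. apply Rnot_lt_le. intro. apply Hn. eauto. }
  rewrite Hg in Hle. simpl in Hle. lra.
Qed.

Lemma real_glb_eq0 P : (forall e, P e -> 0 < e) -> (forall e, 0 < e -> P e) ->
  real_glb P = Finite 0.
Proof.
  intros Hpos Hall. apply Rbar_le_antisym; [|now apply real_glb_ge0].
  apply Rbar_le_of_le_plus_pos; [apply Rle_refl|]. intros h Hh.
  apply real_glb_le. apply Hall. lra.
Qed.

Lemma real_glb_le_sum P1 P2 Q :
  (forall e, P1 e -> 0 < e) -> (forall e, P2 e -> 0 < e) ->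
  (forall e1 e2, P1 e1 -> P2 e2 -> Q (e1 + e2)) ->
  Rbar_le (real_glb Q) (Rbar_plus (real_glb P1) (real_glb P2)).
Proof.
  intros H1 H2 H.
  pose proof (real_glb_ge0 P1 H1) as G1. pose proof (real_glb_ge0 P2 H2) as G2.
  destruct (real_glb P1) as [g1| |] eqn:E1; [| |easy];
    destruct (real_glb P2) as [g2| |] eqn:E2; try easy;
    [|now destruct (real_glb Q)..].
  simpl in G1, G2. apply Rbar_le_of_le_plus_pos; [simpl; lra|]. intros h Hh.
  destruct (real_glb_approx P1 g1 (h / 2) E1 ltac:(lra)) as [e1 [He1 Hlt1]].
  destruct (real_glb_approx P2 g2 (h / 2) E2 ltac:(lra)) as [e2 [He2 Hlt2]].
  eapply Rbar_le_trans; [apply real_glb_le, H; eauto|]. simpl. lra.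
Qed.

Lemma real_glb_le_plus P Q c : 0 < c -> (forall e, P e -> 0 < e) ->
  (forall e, P e -> Q (e + c)) -> Rbar_le (real_glb Q) (Rbar_plus (real_glb P) (Finite c)).
Proof.
  intros Hc Hpos H.
  replace (Finite c) with (real_glb (fun e => e = c)).
  - apply real_glb_le_sum; [| intros e -> |]; auto. intros e1 e2 He1 ->. auto.
  - apply Rbar_le_antisym; [now apply real_glb_le|]. apply real_glb_ge. intros e ->. apply Rle_refl.
Qed.

Record Rbar_pseudometric {T : Type} (D : T -> T -> Rbar) : Prop := {
  dist_refl : forall x, D x x = Finite 0;
  dist_ge0 : forall x y, Rbar_le (Finite 0) (D x y);
  dist_sym : forall x y, D x y = D y x;
  dist_triangle : forall x y z, Rbar_le (D x z) (Rbar_plus (D x y) (D y z)) }.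
Arguments dist_refl {T D} _ _.
Arguments dist_ge0 {T D} _ _ _.
Arguments dist_sym {T D} _ _ _.
Arguments dist_triangle {T D} _ _ _ _.

Lemma metric_ge0 {T : Type} (d : T -> T -> R) : is_metric d -> forall x y, 0 <= d x y.
Proof.
  intros [Hzero [Hsym Htri]] x y. pose proof (Htri x y x) as H.
  rewrite (Hsym y x), (proj2 (Hzero x x) eq_refl) in H. lra.
Qed.

Lemma fin_dist_pseudometric {T : Type} (d : T -> T -> R) :
  is_metric d -> Rbar_pseudometric (fin_dist d).
Proof.
  intro Hd. pose proof (metric_ge0 d Hd) as H0. destruct Hd as [Hzero [Hsym Htri]].
  split; unfold fin_dist; simpl; auto.
  - intro x. now rewrite (proj2 (Hzero x x) eq_refl).
  - intros x y. now rewrite Hsym.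
Qed.

Section Pseudometric.
Context {T : Type} {D : T -> T -> Rbar} (HD : Rbar_pseudometric D).

Lemma dist_lt_finite x y e : Rbar_lt (D x y) (Finite e) ->
  exists t, D x y = Finite t /\ 0 <= t /\ t < e.
Proof.
  intro H. pose proof (dist_ge0 HD x y) as H0.
  destruct (D x y) as [t| |]; simpl in *; try contradiction. now exists t.
Qed.

Lemma dist_triangle_lt x y z a b : Rbar_lt (D x y) (Finite a) -> Rbar_lt (D y z) (Finite b) ->
  Rbar_lt (D x z) (Finite (a + b)).
Proof.
  intros Hxy Hyz.
  destruct (dist_lt_finite x y a Hxy) as [t1 [E1 [? ?]]].
  destruct (dist_lt_finite y z b Hyz) as [t2 [E2 [? ?]]].
  pose proof (dist_triangle HD x y z) as Htri. rewrite E1, E2 in Htri.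
  eapply Rbar_le_lt_trans; [exact Htri|]. simpl. lra.
Qed.

End Pseudometric.

Section Borel.
Context {T : Type} (D : T -> T -> Rbar).

Lemma borel_open U : is_open D U -> borel D U.
Proof. intros HU S HS Hopen. auto. Qed.

Lemma borel_empty : borel D (fun _ => False).
Proof. intros S HS _. apply HS. Qed.

Lemma borel_compl A : borel D A -> borel D (fun x => ~ A x).
Proof. intros HA S HS Hopen. apply HS, HA; auto. Qed.

Lemma borel_union (F : nat -> T -> Prop) :
  (forall n, borel D (F n)) -> borel D (fun x => exists n, F n x).
Proof. intros HF S HS Hopen. apply HS. intro n. apply HF; auto. Qed.

Lemma borel_closed A : is_closed D A -> borel D A.
Proof.
  intro HA. replace A with (fun x => ~ ~ A x) by (apply pred_ext; intro; tauto).
  apply borel_compl, borel_open, HA.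
Qed.

Lemma borel_diff A B : borel D A -> borel D B -> borel D (fun x => B x /\ ~ A x).
Proof.
  intros HA HB.
  (* B \ A is the complement of the countable union ~B, A, A, ... *)
  replace (fun x => B x /\ ~ A x)
    with (fun x => ~ exists n : nat, (if n then fun x => ~ B x else A) x).
  - apply borel_compl, borel_union. intros [|n]; [apply borel_compl|]; auto.
  - apply pred_ext. intro x. split.
    + intro H. split; [apply NNPP|]; intro; apply H; [exists 0%nat | exists 1%nat]; auto.
    + intros [Hb Ha] [[|n] Hn]; auto.
Qed.

Lemma fmeasure_disjoint_union mu A B : is_fmeasure D mu -> borel D A -> borel D B ->
  (forall x, A x -> B x -> False) -> mu (fun x => A x \/ B x) = mu A + mu B.
Proof.
  intros [_ [Hempty Hadd]] HA HB Hdis.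
  set (F := fun n : nat => match n with 0%nat => A | 1%nat => B | _ => fun _ => False end).
  assert (Hsum : infinite_sum (fun n => mu (F n)) (mu (fun x => exists n, F n x))).
  { apply Hadd.
    - intros [|[|n]]; simpl; auto using borel_empty.
    - intros [|[|n]] [|[|m]] x; simpl; intros; try reflexivity; firstorder. }
  replace (fun x => exists n, F n x) with (fun x => A x \/ B x) in Hsum.
  - apply (uniqueness_sum _ _ _ Hsum). intros eps Heps. exists 1%nat. intros n Hn.
    replace (sum_f_R0 (fun n => mu (F n)) n) with (mu A + mu B).
    + unfold R_dist. rewrite Rminus_diag, Rabs_R0. exact Heps.
    + induction n as [|[|n] IH]; [lia|reflexivity|].
      simpl sum_f_R0 in *. rewrite <- IH by lia. simpl. rewrite Hempty. ring.
  - apply pred_ext. intro x. split.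
    + intros [Ha|Hb]; [exists 0%nat | exists 1%nat]; auto.
    + intros [[|[|n]] Hn]; simpl in Hn; tauto.
Qed.

Lemma fmeasure_le mu A B : is_fmeasure D mu -> borel D A -> borel D B ->
  (forall x, A x -> B x) -> mu A <= mu B.
Proof.
  intros Hmu HA HB HAB.
  replace B with (fun x => A x \/ (B x /\ ~ A x)).
  - rewrite fmeasure_disjoint_union; auto using borel_diff; [|tauto].
    pose proof (proj1 Hmu _ (borel_diff A B HA HB)). lra.
  - apply pred_ext. intro x. split; [intros [Ha|[Hb _]]; auto|].
    intro Hb. destruct (classic (A x)); auto.
Qed.

End Borel.

Definition nonexpanding {T T' : Type} (D : T -> T -> Rbar) (D' : T' -> T' -> Rbar)
  (g : T -> T') : Prop :=
  forall x y, Rbar_le (D' (g x) (g y)) (D x y).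

Section Nonexpanding.
Context {T T' : Type} {D : T -> T -> Rbar} {D' : T' -> T' -> Rbar} {g : T -> T'}
  (Hg : nonexpanding D D' g).

Lemma nonexpanding_open_preimage U : is_open D' U -> is_open D (fun x => U (g x)).
Proof.
  intros HU x Hx. destruct (HU _ Hx) as [e [He H]]. exists e. split; auto.
  intros y Hy. apply H. eapply Rbar_le_lt_trans; [apply Hg|exact Hy].
Qed.

Lemma nonexpanding_closed_preimage A : is_closed D' A -> is_closed D (fun x => A (g x)).
Proof. apply nonexpanding_open_preimage. Qed.

Lemma nonexpanding_borel_preimage A : borel D' A -> borel D (fun x => A (g x)).
Proof.
  intros HA S [Hempty [Hcompl Hunion]] Hopen.
  apply (HA (fun B => S (fun x => B (g x)))).
  - split; [exact Hempty|split].
    + intros B HB. exact (Hcompl _ HB).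
    + intros F HF. exact (Hunion (fun n x => F n (g x)) HF).
  - intros U HU. apply Hopen, nonexpanding_open_preimage, HU.
Qed.

Lemma fmeasure_push mu : is_fmeasure D mu -> is_fmeasure D' (push g mu).
Proof.
  intros [Hpos [Hempty Hadd]]. split; [|split].
  - intros A HA. apply Hpos, nonexpanding_borel_preimage, HA.
  - exact Hempty.
  - intros F HF Hdis. apply (Hadd (fun n x => F n (g x))); [|firstorder].
    intro n. apply nonexpanding_borel_preimage, HF.
Qed.

End Nonexpanding.

Lemma isometric_nonexpanding {T Z : Type} (d : T -> T -> R) (dZ : Z -> Z -> R) (i : T -> Z) :
  isometric d dZ i -> nonexpanding (fin_dist d) (fin_dist dZ) i.
Proof. intros Hi x y. unfold fin_dist. rewrite Hi. apply Rle_refl. Qed.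

Definition closure {T : Type} (D : T -> T -> Rbar) (S : T -> Prop) : T -> Prop :=
  fun x => forall h, 0 < h -> exists s, S s /\ Rbar_lt (D x s) (Finite h).

Section Neighbourhoods.
Context {T : Type} {D : T -> T -> Rbar} (HD : Rbar_pseudometric D).

Lemma closure_closed S : is_closed D (closure D S).
Proof.
  intros x Hx. apply not_all_ex_not in Hx as [h Hh].
  apply imply_to_and in Hh as [Hh Hfar].
  exists (h / 2). split; [lra|]. intros y Hxy Hy.
  destruct (Hy (h / 2) ltac:(lra)) as [s [Hs Hys]].
  apply Hfar. exists s. split; auto.
  replace h with (h / 2 + h / 2) by field. now apply (dist_triangle_lt HD) with y.
Qed.

Lemma subset_closure S x : S x -> closure D S x.
Proof. intros Hs h Hh. exists x. rewrite (dist_refl HD). auto. Qed.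

Lemma subset_nbhd A e x : 0 < e -> A x -> nbhd D A e x.
Proof. intros He Ha. exists x. rewrite (dist_refl HD). auto. Qed.

Lemma nbhd_open A e : is_open D (nbhd D A e).
Proof.
  intros x [a [Ha Hxa]]. destruct (dist_lt_finite HD x a e Hxa) as [t [Et [Ht0 Hte]]].
  exists ((e - t) / 2). split; [lra|]. intros y Hxy. exists a. split; auto.
  replace e with ((e - t) / 2 + (t + (e - t) / 2)) by field.
  apply (dist_triangle_lt HD) with x; [now rewrite (dist_sym HD)|]. rewrite Et. simpl. lra.
Qed.

Lemma nbhd_borel A e : borel D (nbhd D A e).
Proof. apply borel_open, nbhd_open. Qed.

Lemma nbhd_closure S e x : nbhd D (closure D S) e x -> nbhd D S e x.
Proof.
  intros [k [Hk Hxk]]. destruct (dist_lt_finite HD x k e Hxk) as [t [Et [Ht0 Hte]]].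
  destruct (Hk ((e - t) / 2) ltac:(lra)) as [s [Hs Hks]].
  exists s. split; auto.
  replace e with (t + (e - t) / 2 + (e - t) / 2) by field.
  apply (dist_triangle_lt HD) with k; [rewrite Et; simpl; lra|auto].
Qed.

Lemma nbhd_nbhd A e1 e2 x : nbhd D (nbhd D A e1) e2 x -> nbhd D A (e1 + e2) x.
Proof.
  intros [y [[a [Ha Hya]] Hxy]]. exists a. split; auto.
  rewrite Rplus_comm. now apply (dist_triangle_lt HD) with y.
Qed.

End Neighbourhoods.

Definition nbhd_dominated {T : Type} (D : T -> T -> Rbar) (mu eta : (T -> Prop) -> R)
  (e : R) : Prop :=
  forall A, is_closed D A -> mu A <= eta (nbhd D A e) + e.

Lemma prokhorov_eq {T : Type} (D : T -> T -> Rbar) mu eta : prokhorov D mu eta =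
  real_glb (fun e => 0 < e /\ nbhd_dominated D mu eta e /\ nbhd_dominated D eta mu e).
Proof. apply Rbar_glb_rw. unfold nbhd_dominated. firstorder. Qed.

Lemma prokhorov_ge0 {T : Type} (D : T -> T -> Rbar) mu eta :
  Rbar_le (Finite 0) (prokhorov D mu eta).
Proof. rewrite prokhorov_eq. apply real_glb_ge0. intros e [He _]. exact He. Qed.

Lemma prokhorov_sym {T : Type} (D : T -> T -> Rbar) mu eta :
  prokhorov D mu eta = prokhorov D eta mu.
Proof. rewrite !prokhorov_eq. apply Rbar_glb_rw. firstorder. Qed.

Section Prokhorov.
Context {T : Type} {D : T -> T -> Rbar} (HD : Rbar_pseudometric D).

Lemma nbhd_dominated_refl mu e : is_fmeasure D mu -> 0 < e -> nbhd_dominated D mu mu e.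
Proof.
  intros Hmu He A HA.
  enough (mu A <= mu (nbhd D A e)) by lra.
  apply (fmeasure_le D); auto using borel_closed, nbhd_borel, subset_nbhd.
Qed.

Lemma nbhd_dominated_trans a b c e1 e2 : is_fmeasure D b -> is_fmeasure D c ->
  nbhd_dominated D a b e1 -> nbhd_dominated D b c e2 -> nbhd_dominated D a c (e1 + e2).
Proof.
  intros Hb Hc Hab Hbc A HA.
  set (K := closure D (nbhd D A e1)).
  assert (HK : is_closed D K) by apply (closure_closed HD).
  assert (b (nbhd D A e1) <= b K).
  { apply (fmeasure_le D); auto using borel_closed, nbhd_borel.
    intros x Hx. now apply (subset_closure HD). }
  assert (c (nbhd D K e2) <= c (nbhd D A (e1 + e2))).
  { apply (fmeasure_le D); auto using nbhd_borel.
    intros x Hx. apply (nbhd_nbhd HD), (nbhd_closure HD), Hx. }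
  specialize (Hab A HA). specialize (Hbc K HK). lra.
Qed.

Lemma prokhorov_self mu : is_fmeasure D mu -> prokhorov D mu mu = Finite 0.
Proof.
  intro Hmu. rewrite prokhorov_eq. apply real_glb_eq0; [now intros e [He _]|].
  intros e He. split; [|split]; auto using nbhd_dominated_refl.
Qed.

Lemma prokhorov_triangle a b c : is_fmeasure D a -> is_fmeasure D b -> is_fmeasure D c ->
  Rbar_le (prokhorov D a c) (Rbar_plus (prokhorov D a b) (prokhorov D b c)).
Proof.
  intros Ha Hb Hc. rewrite !prokhorov_eq.
  apply real_glb_le_sum; [now intros e [He _]..|].
  intros e1 e2 [He1 [Hab Hba]] [He2 [Hbc Hcb]]. split; [lra|split].
  - now apply nbhd_dominated_trans with b.
  - rewrite Rplus_comm. now apply nbhd_dominated_trans with b.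
Qed.

End Prokhorov.

Section ProkhorovPush.
Context {T T' : Type} {D : T -> T -> Rbar} {D' : T' -> T' -> Rbar}
  (HD : Rbar_pseudometric D) (HD' : Rbar_pseudometric D') (g : T -> T')
  (Hg : nonexpanding D D' g).

Lemma nbhd_dominated_push a b e : is_fmeasure D b ->
  nbhd_dominated D a b e -> nbhd_dominated D' (push g a) (push g b) e.
Proof.
  intros Hb Hab A HA. unfold push.
  specialize (Hab _ (nonexpanding_closed_preimage Hg A HA)).
  enough (b (nbhd D (fun x => A (g x)) e) <= b (fun x => nbhd D' A e (g x))) by lra.
  apply (fmeasure_le D);
    [exact Hb | apply (nbhd_borel HD) | apply (nonexpanding_borel_preimage Hg), (nbhd_borel HD')|].
  intros x [y [Hy Hxy]]. exists (g y). split; auto. eapply Rbar_le_lt_trans; eauto.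
Qed.

Lemma prokhorov_push_le a b : is_fmeasure D a -> is_fmeasure D b ->
  Rbar_le (prokhorov D' (push g a) (push g b)) (prokhorov D a b).
Proof.
  intros Ha Hb. rewrite !prokhorov_eq. apply real_glb_antimono.
  intros e [He [Hab Hba]]. auto using nbhd_dominated_push.
Qed.

Variable eps : R.
Hypothesis Heps : 0 < eps.
Hypothesis Hdistortion :
  forall x y, Rbar_le (D x y) (Rbar_plus (D' (g x) (g y)) (Finite eps)).

Lemma nbhd_dominated_of_push a b e : is_fmeasure D a -> is_fmeasure D b ->
  nbhd_dominated D' (push g a) (push g b) e -> nbhd_dominated D a b (e + eps).
Proof.
  intros Ha Hb Hab S HS.
  set (K := closure D' (fun z => exists s, S s /\ g s = z)).
  assert (HK : is_closed D' K) by apply (closure_closed HD').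
  assert (a S <= a (fun x => K (g x))).
  { apply (fmeasure_le D);
      [exact Ha | now apply borel_closed
      | apply borel_closed, (nonexpanding_closed_preimage Hg), HK |].
    intros x Hx. apply (subset_closure HD'). eauto. }
  assert (b (fun x => nbhd D' K e (g x)) <= b (nbhd D S (e + eps))).
  { apply (fmeasure_le D);
      [exact Hb | apply (nonexpanding_borel_preimage Hg), (nbhd_borel HD')
      | apply (nbhd_borel HD) |].
    intros x Hx. apply (nbhd_closure HD') in Hx as [z [[s [Hs <-]] Hxs]].
    exists s. split; auto.
    destruct (dist_lt_finite HD' _ _ _ Hxs) as [t [Et [_ Hte]]].
    eapply Rbar_le_lt_trans; [apply Hdistortion|]. rewrite Et. simpl. lra. }
  specialize (Hab K HK). unfold push in Hab. lra.
Qed.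

Lemma prokhorov_le_push_plus a b : is_fmeasure D a -> is_fmeasure D b ->
  Rbar_le (prokhorov D a b)
          (Rbar_plus (prokhorov D' (push g a) (push g b)) (Finite eps)).
Proof.
  intros Ha Hb. rewrite !prokhorov_eq. apply real_glb_le_plus; [exact Heps|now intros e [He _]|].
  intros e [He [Hab Hba]]. split; [lra|]. auto using nbhd_dominated_of_push.
Qed.

End ProkhorovPush.

Lemma Mf_eq {T : Type} {d : T -> T -> R} (mu eta : Mf d) : proj1_sig mu = proj1_sig eta -> mu = eta.
Proof. apply eq_sig_hprop. intros. apply proof_irrelevance. Qed.

Lemma dP_pseudometric {T : Type} (d : T -> T -> R) : is_metric d -> Rbar_pseudometric (dP d).
Proof.
  intro Hd. pose proof (fin_dist_pseudometric d Hd) as HD. unfold dP.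
  split.
  - intros [mu Hmu]. now apply prokhorov_self.
  - intros. apply prokhorov_ge0.
  - intros. apply prokhorov_sym.
  - intros [a Ha] [b Hb] [c Hc]. now apply prokhorov_triangle.
Qed.

Section TwoLevelPush.
Context {T T' : Type} {d : T -> T -> R} {d' : T' -> T' -> R} {g : T -> T'}
  (Hg : nonexpanding (fin_dist d) (fin_dist d') g).

Definition Mf_push (mu : Mf d) : Mf d' :=
  exist _ (push g (proj1_sig mu)) (fmeasure_push Hg _ (proj2_sig mu)).

Lemma push2_Mf_push nu : push2 d d' g nu = push Mf_push nu.
Proof.
  extensionality B. unfold push2, push. f_equal. apply pred_ext. intro mu. split.
  - intros [eta [HB Heta]]. replace (Mf_push mu) with eta; auto. now apply Mf_eq.
  - intro HB. now exists (Mf_push mu).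
Qed.

Lemma Mf_push_nonexpanding : is_metric d -> is_metric d' -> nonexpanding (dP d) (dP d') Mf_push.
Proof.
  intros Hd Hd' [a Ha] [b Hb]. unfold dP. simpl.
  apply prokhorov_push_le; auto using fin_dist_pseudometric.
Qed.

Lemma push2_2measure nu : is_metric d -> is_metric d' ->
  is_2measure d nu -> is_2measure d' (push2 d d' g nu).
Proof.
  intros Hd Hd' Hnu. rewrite push2_Mf_push.
  exact (fmeasure_push (Mf_push_nonexpanding Hd Hd') nu Hnu).
Qed.

Lemma dP2_le_push2_plus (eps : R) nu lam : is_metric d -> is_metric d' -> 0 < eps ->
  (forall x y, d x y <= d' (g x) (g y) + eps) ->
  is_2measure d nu -> is_2measure d lam ->
  Rbar_le (dP2 d nu lam)
          (Rbar_plus (dP2 d' (push2 d d' g nu) (push2 d d' g lam)) (Finite eps)).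
Proof.
  intros Hd Hd' Heps Hdist Hnu Hlam. unfold dP2. rewrite !push2_Mf_push.
  apply prokhorov_le_push_plus; auto using dP_pseudometric, Mf_push_nonexpanding.
  intros [mu Hmu] [eta Heta]. unfold dP. simpl.
  apply prokhorov_le_push_plus; auto using fin_dist_pseudometric.
Qed.

End TwoLevelPush.

Lemma push2_comp {T T' T'' : Type} (d : T -> T -> R) (d' : T' -> T' -> R) (d'' : T'' -> T'' -> R)
  (g : T -> T') (h : T' -> T'') nu :
  nonexpanding (fin_dist d) (fin_dist d') g -> nonexpanding (fin_dist d') (fin_dist d'') h ->
  push2 d' d'' h (push2 d d' g nu) = push2 d d'' (fun x => h (g x)) nu.
Proof.
  intros Hg Hh.
  assert (Hhg : nonexpanding (fin_dist d) (fin_dist d'') (fun x => h (g x))).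
  { intros x y. eapply Rbar_le_trans; [apply Hh|apply Hg]. }
  rewrite (push2_Mf_push Hg), (push2_Mf_push Hh), (push2_Mf_push Hhg).
  extensionality B. unfold push. f_equal. extensionality mu. f_equal. now apply Mf_eq.
Qed.

Definition cauchy_seq {S : Type} (d : S -> S -> R) (u : nat -> S) : Prop :=
  forall e, 0 < e -> exists N, forall n m, (N <= n)%nat -> (N <= m)%nat -> d (u n) (u m) < e.

Definition converges {S : Type} (d : S -> S -> R) (u : nat -> S) : Prop :=
  exists l, forall e, 0 < e -> exists N, forall n, (N <= n)%nat -> d (u n) l < e.

Lemma cauchy_converges_of_frequently_in_image {X S : Type} (r : X -> X -> R)
  (r' : S -> S -> R) (e : X -> S) (u : nat -> S) :
  is_metric r' -> isometric r r' e -> is_complete r -> cauchy_seq r' u ->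
  (forall N, exists n, (N <= n)%nat /\ exists x, u n = e x) -> converges r' u.
Proof.
  intros [_ [_ Htri]] He Hr Hu Hfreq.
  destruct (functional_choice (fun N p => (N <= fst p)%nat /\ u (fst p) = e (snd p)))
    as [phi Hphi].
  { intro N. destruct (Hfreq N) as [n [Hn [x Hx]]]. now exists (n, x). }
  destruct (Hr (fun k => snd (phi k))) as [l Hl].
  { intros eps Heps. destruct (Hu eps Heps) as [N HN]. exists N. intros n m Hn Hm.
    rewrite <- He, <- (proj2 (Hphi n)), <- (proj2 (Hphi m)).
    apply HN; [pose proof (proj1 (Hphi n)) | pose proof (proj1 (Hphi m))]; lia. }
  exists (e l). intros eps Heps.
  destruct (Hu (eps / 2) ltac:(lra)) as [N1 HN1].
  destruct (Hl (eps / 2) ltac:(lra)) as [N2 HN2].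
  exists (max N1 N2). intros n Hn. destruct (Hphi n) as [Hle Heq].
  pose proof (Htri (u n) (u (fst (phi n))) (e l)).
  assert (r' (u n) (u (fst (phi n))) < eps / 2) by (apply HN1; lia).
  assert (r' (u (fst (phi n))) (e l) < eps / 2) by (rewrite Heq, He; apply HN2; lia).
  lra.
Qed.

Section DisjointUnion.
Context {X Y : Type} (r : X -> X -> R) (d : Y -> Y -> R) (r' : X + Y -> X + Y -> R)
  (Hr' : extends_both r d r').

Lemma extends_both_complete : is_complete r -> is_complete d -> is_complete r'.
Proof.
  destruct Hr' as [Hm [Hl Hrr]]. intros Hr Hd u Hu.
  destruct (classic (forall N, exists n, (N <= n)%nat /\ exists x, u n = inl x)) as [Hinl|Hinl].
  - now apply (cauchy_converges_of_frequently_in_image r r' inl).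
  - apply not_all_ex_not in Hinl as [N0 HN0].
    apply (cauchy_converges_of_frequently_in_image d r' inr); auto.
    intro N. exists (max N N0). split; [lia|].
    destruct (u (max N N0)) as [x|y] eqn:E; [|now exists y].
    exfalso. apply HN0. exists (max N N0). split; [lia|]. now exists x.
Qed.

Lemma extends_both_separable : is_separable r -> is_separable d -> is_separable r'.
Proof.
  destruct Hr' as [_ [Hl Hrr]].
  intros [DX [[fX HfX] HDX]] [DY [[fY HfY] HDY]].
  exists (fun a => match a with inl x => DX x | inr y => DY y end). split.
  - exists (fun a => match a with inl x => (2 * fX x)%nat | inr y => S (2 * fY y) end).
    intros [x|y] [x'|y'] Ha Hb Hf; try lia; f_equal; [apply HfX|apply HfY]; auto; lia.
  - intros [x|y] e He.
    + destruct (HDX x e He) as [z [Hz Hxz]]. exists (inl z). now rewrite Hl.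
    + destruct (HDY y e He) as [z [Hz Hyz]]. exists (inr z). now rewrite Hrr.
Qed.

Lemma extends_both_polish : polish_metric r -> polish_metric d -> polish_metric r'.
Proof.
  intros [_ [Hrc Hrs]] [_ [Hdc Hds]].
  split; [apply Hr'|split; auto using extends_both_complete, extends_both_separable].
Qed.

End DisjointUnion.

Section Gluing.
Context {X Y Z : Type} {r : X -> X -> R} {d : Y -> Y -> R} (dZ : Z -> Z -> R)
  (iX : X -> Z) (iY : Y -> Z) (eps : R).
Hypotheses (Hr : is_metric r) (Hd : is_metric d) (HZ : is_metric dZ)
  (HiX : isometric r dZ iX) (HiY : isometric d dZ iY) (Heps : 0 < eps).

Definition glue_map (a : X + Y) : Z := match a with inl x => iX x | inr y => iY y end.

Definition glued_metric (a b : X + Y) : R :=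
  dZ (glue_map a) (glue_map b) +
  match a, b with inl _, inr _ | inr _, inl _ => eps | _, _ => 0 end.

Lemma glued_metric_inl : isometric r glued_metric inl.
Proof. intros x x'. unfold glued_metric. simpl. rewrite HiX. ring. Qed.

Lemma glued_metric_inr : isometric d glued_metric inr.
Proof. intros y y'. unfold glued_metric. simpl. rewrite HiY. ring. Qed.

Lemma glued_metric_is_metric : is_metric glued_metric.
Proof.
  pose proof (metric_ge0 dZ HZ) as HZ0. destruct HZ as [HZzero [HZsym HZtri]].
  split; [|split].
  - intros [x|y] [x'|y'].
    + rewrite glued_metric_inl. destruct Hr as [Hzero _].
      split; [intros ->%Hzero|intros [= ->]; now apply Hzero]; reflexivity.
    + unfold glued_metric. simpl. pose proof (HZ0 (iX x) (iY y')). split; [lra|discriminate].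
    + unfold glued_metric. simpl. pose proof (HZ0 (iY y) (iX x')). split; [lra|discriminate].
    + rewrite glued_metric_inr. destruct Hd as [Hzero _].
      split; [intros ->%Hzero|intros [= ->]; now apply Hzero]; reflexivity.
  - intros [x|y] [x'|y']; unfold glued_metric; simpl; now rewrite HZsym.
  - intros a b c. unfold glued_metric. pose proof (HZtri (glue_map a) (glue_map b) (glue_map c)).
    destruct a, b, c; lra.
Qed.

Lemma glued_metric_extends : extends_both r d glued_metric.
Proof.
  split; [apply glued_metric_is_metric|split; [apply glued_metric_inl|apply glued_metric_inr]].
Qed.

Lemma glue_map_nonexpanding : nonexpanding (fin_dist glued_metric) (fin_dist dZ) glue_map.
Proof.
  intros a b. unfold fin_dist, glued_metric. simpl. destruct a, b; lra.
Qed.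

Lemma glued_metric_le a b : glued_metric a b <= dZ (glue_map a) (glue_map b) + eps.
Proof. unfold glued_metric. destruct a, b; lra. Qed.

Lemma glued_dP2_le nu lam : is_2measure r nu -> is_2measure d lam ->
  Rbar_le (dP2 glued_metric (push2 r glued_metric inl nu) (push2 d glued_metric inr lam))
          (Rbar_plus (dP2 dZ (push2 r dZ iX nu) (push2 d dZ iY lam)) (Finite eps)).
Proof.
  intros Hnu Hlam.
  pose proof glued_metric_is_metric as Hglued.
  pose proof (isometric_nonexpanding _ _ _ glued_metric_inl) as Hinl.
  pose proof (isometric_nonexpanding _ _ _ glued_metric_inr) as Hinr.
  eapply Rbar_le_trans.
  - apply (dP2_le_push2_plus glue_map_nonexpanding eps); auto using glued_metric_le, push2_2measure.
  - rewrite !push2_comp by auto using glue_map_nonexpanding. apply Rbar_le_refl.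
Qed.

End Gluing.

Theorem mainTheorem18 :
  forall (Xs : RN -> Prop) (r : pts Xs -> pts Xs -> R) (nu : (Mf r -> Prop) -> R)
         (Ys : RN -> Prop) (d : pts Ys -> pts Ys -> R) (lam : (Mf d -> Prop) -> R),
    is_m2m Xs r nu -> is_m2m Ys d lam ->
    d2GP Xs r nu Ys d lam =
    Rbar_glb (fun v => exists r' : (pts Xs + pts Ys)%type -> (pts Xs + pts Ys)%type -> R,
      extends_both r d r' /\
      v = dP2 r' (push2 r r' inl nu) (push2 d r' inr lam)).
Proof.
  intros Xs r nu Ys d lam [_ [Pr Hnu]] [_ [Pd Hlam]].
  unfold d2GP. apply Rbar_le_antisym.
  - apply Rbar_glb_subset. intros v [r' [Hr' ->]].
    exists (pts Xs + pts Ys)%type, r', inl, inr.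
    split; [now apply (extends_both_polish r d)|].
    destruct Hr' as [_ [Hl Hrr]]. now repeat split.
  - apply Rbar_glb_is_glb. intros v [Z [dZ [iX [iY [PZ [HiX [HiY ->]]]]]]].
    apply Rbar_le_of_le_plus_pos; [apply prokhorov_ge0|]. intros h Hh.
    destruct Pr as [Hr _], Pd as [Hd _], PZ as [HZ _].
    eapply Rbar_le_trans.
    + apply (proj1 (Rbar_glb_is_glb _)). exists (glued_metric dZ iX iY h).
      split; [apply glued_metric_extends; auto|reflexivity].
    + apply glued_dP2_le; auto.
Qed.
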